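(* Let $\mu\in\mathcal P_2(\mathbb R^d)$, $\psi\in T_\mu(\mathcal P_2(\mathbb R^d))$ and $\eta\in\mathcal P(C([0,1],\mathbb R^d))$ with $(e_0)_\#\eta=\mu$. Then there exists a parallel transport of $\psi$ along $\eta$.
   Context: $\mathcal P(O)$ denotes Borel probability measures on $O$; $\mathcal P_2(\mathbb R^d)$ those on $\mathbb R^d$ with finite second moment; $f_\#m$ is the image measure. $T_\mu(\mathcal P_2(\mathbb R^d))$ is the set of measurable maps $\psi:\mathbb R^d\to\mathcal P(\mathbb R^d)$, $x\mapsto\psi_x$, with $\int\int|z|^2\psi_x(dz)\mu(dx)<\infty$; such $\psi$ is identified with the measure $\mu(dx)\psi_x(dz)$ on $\mathbb R^{2d}$. For $t\in[0,1]$, $e_t$ is the evaluation map $w\mapsto w(t)$ on spaces of continuous curves. $\pi_1,\pi_2$ are the projections of $\mathbb R^d\times\mathbb R^d$. Let $p_1:C([0,1],\mathbb R^{2d})\to C([0,1],\mathbb R^d)$, $p_1(w)(t)=\pi_1(w(t))$; let $C^1_y([0,1],\mathbb R^{2d})$ be the set of continuous curves $w$ with $t\mapsto\pi_2(w(t))$ of class $C^1$, and on it $\partial_2(w)(t)=\frac{d}{dt}\pi_2(w(t))$. A parallel transport of $\psi\in T_\mu(\mathcal P_2(\mathbb R^d))$ along $\eta$ (with $(e_0)_\#\eta=\mu$) is a probability measure $\Psi$ on $C([0,1],\mathbb R^{2d})$ concentrated on $C^1_y([0,1],\mathbb R^{2d})$ such that $(p_1)_\#\Psi=\eta$, $(\partial_2)_\#\Psi=\delta_0$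 (Dirac mass at the zero curve), and $(e_0)_\#\Psi(dx,dz)=\mu(dx)\psi_x(dz)$. *)

From HB Require Import structures.
From mathcomp Require Import all_boot all_order all_algebra.
From mathcomp Require Import all_classical all_reals all_analysis.
Set Implicit Arguments. Unset Strict Implicit. Unset Printing Implicit Defensive.
Import Order.TTheory GRing.Theory Num.Theory.
Import numFieldNormedType.Exports.
Local Open Scope classical_set_scope.
Local Open Scope ring_scope.

(* Borel sigma-algebra on R^d = 'rV[R]_d (more generally on matrices),       *)
Definition borel_display : measure_display. Proof. exact. Qed.

Section borel_matrix.
Context (R : realType) (m n : nat).

Definition borel_mx : set (set 'M[R]_(m, n)) := <<s open >>.

Lemma borel_mx0 : borel_mx set0.
Proof. exact: sigma_algebra0. Qed.

Lemma borel_mxC (A : set 'M[R]_(m, n)) : borel_mx A -> borel_mx (~` A).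
Proof. by move=> hA; rewrite -setTD; exact: sigma_algebraCD. Qed.

Lemma borel_mxU (F : (set 'M[R]_(m, n))^nat) :
  (forall i, borel_mx (F i)) -> borel_mx (\bigcup_i F i).
Proof. exact: sigma_algebra_bigcup. Qed.

HB.instance Definition _ := @isMeasurable.Build borel_display 'M[R]_(m, n)
  borel_mx borel_mx0 borel_mxC borel_mxU.
End borel_matrix.

Definition sqnorm (R : realType) (d : nat) (z : 'rV[R]_d) : R :=
  \sum_(i < d) z ord0 i ^+ 2.

(* Continuous curves [0,1] -> V, represented as functions R -> V that are    *)
(* continuous on [0,1] and constant outside [0,1] (f t = f (clamp t)); this  *)
(* is a bijective encoding of C([0,1], V).                                   *)
Section curves.
Context (R : realType).

Definition clamp01 (t : R) : R := Num.max 0 (Num.min t 1).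

Definition is_curve (V : topologicalType) (f : R -> V) : Prop :=
  {within `[0, 1]%classic, continuous f} /\ forall t, f t = f (clamp01 t).

Definition curve (V : topologicalType) := {f : R -> V | is_curve f}.

Definition curve_fun (V : topologicalType) (w : curve V) : R -> V := proj1_sig w.

Lemma is_curve_cst (V : ptopologicalType) : is_curve (fun _ : R => (point : V)).
Proof. by split => // t; exact: cst_continuous. Qed.

Definition curve_point (V : ptopologicalType) : curve V :=
  exist _ _ (is_curve_cst V).

HB.instance Definition _ (V : ptopologicalType) := gen_eqMixin (curve V).
HB.instance Definition _ (V : ptopologicalType) := gen_choiceMixin (curve V).
HB.instance Definition _ (V : ptopologicalType) :=
  isPointed.Build (curve V) (curve_point V).

Definition ev (V : topologicalType) (t : R) (w : curve V) : V := curve_fun w t.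

Definition ev_generators (V : topologicalType) (mV : set (set V)) :
  set (set (curve V)) :=
  [set ev t @^-1` A | t in `[0, 1]%classic & A in mV]%classic.
End curves.

(* The measurable space C([0,1], V) with the sigma-algebra generated by the *)
(* evaluation maps (= Borel sigma-algebra of the sup-norm topology).         *)
Definition Curves (R : realType) (V : ptopologicalType) (mV : set (set V)) :=
  g_sigma_algebraType (@ev_generators R V mV).

Section projections.
Context (R : realType) (d : nat).
Local Notation Rd := 'rV[R]_d.

Lemma is_curve_fst (w : curve R (Rd * Rd)%type) :
  is_curve (fun t => (curve_fun w t).1).
Proof.
case: w => f [cf ef] /=; split; last by move=> t; rewrite ef.
move=> x; apply: continuous_comp; [exact: cf | exact: cvg_fst].
Qed.

Definition p1 (w : curve R (Rd * Rd)%type) : curve R Rd :=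
  exist _ _ (is_curve_fst w).

Definition is_deriv01 (y g : R -> Rd) : Prop :=
  forall t, t \in `[0, 1]%classic ->
    (fun h : R => h^-1 *: (y (t + h) - y t))
      @ within [set h | h != 0 /\ t + h \in `[0, 1]%classic] (nbhs (0 : R))
      --> g t.

Definition C1y (w : curve R (Rd * Rd)%type) : Prop :=
  exists g : R -> Rd, {within `[0, 1]%classic, continuous g} /\
    is_deriv01 (fun t => (curve_fun w t).2) g.

Definition partial2_zero (w : curve R (Rd * Rd)%type) : Prop :=
  is_deriv01 (fun t => (curve_fun w t).2) (fun _ => 0).
End projections.

Section path_spaces.
Context (R : realType) (d : nat).
Definition Rd2 : Type := ('rV[R]_d * 'rV[R]_d)%type.
HB.instance Definition _ := Topological.on Rd2.
HB.instance Definition _ := Pointed.on Rd2.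
(* product (= Borel) sigma-algebra on R^d x R^d = R^{2d} *)
Definition meas_Rd2 : set (set Rd2) :=
  @measurable _ ('rV[R]_d * 'rV[R]_d)%type.
Definition CRd := Curves R (@measurable _ 'rV[R]_d).
Definition CRd2 := Curves R meas_Rd2.
End path_spaces.

From HB Require Import structures.
From mathcomp Require Import all_boot all_order all_algebra.
From mathcomp Require Import all_classical all_reals all_analysis.
From mathcomp Require Import measurable_realfun.
Import Order.TTheory GRing.Theory Num.Theory.
Import numFieldNormedType.Exports.
Local Open Scope classical_set_scope.
Local Open Scope ring_scope.

Set Implicit Arguments. Unset Strict Implicit. Unset Printing Implicit Defensive.

(** The vector is kept constant along the curve: draw [w] according to [eta],
    then [z] according to [psi (w 0)], and let [Psi] be the law of the curve
    [t |-> (w t, z)].  Its first component has law [eta], and since [w 0] has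
    law [mu] its value at time 0 has law [mu(dx) psi_x(dz)].  Every such curve
    has a constant second component, hence lies in [C^1_y] with vanishing
    derivative; the set of these curves is measurable because, by continuity,
    it is cut out by the countably many conditions [y (k / (n + 1)) = y 0]. *)

Section kernel_pullback.
Context d d' d'' (X : measurableType d) (Y : measurableType d')
  (Z : measurableType d'') (R : realType).
Variables (k : R.-pker Y ~> Z) (f : X -> Y).

Definition kernel_pullback (mf : measurable_fun [set: X] f) :
  X -> {measure set Z -> \bar R} := k \o f.

Hypothesis mf : measurable_fun [set: X] f.

Let measurable_kernel_pullback U : measurable U ->
  measurable_fun [set: X] (kernel_pullback mf ^~ U).
Proof. by move=> mU; exact: measurableT_comp (measurable_kernel k U mU) mf. Qed.

HB.instance Definition _ :=
  isKernel.Build _ _ X Z R (kernel_pullback mf) measurable_kernel_pullback.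

Let kernel_pullback_prob x : kernel_pullback mf x [set: Z] = 1%E.
Proof. exact: prob_kernel. Qed.

HB.instance Definition _ :=
  Kernel_isProbability.Build _ _ X Z R (kernel_pullback mf)
    kernel_pullback_prob.

End kernel_pullback.

Section measure_kernel_prod.
Context d d' (X : measurableType d) (Y : measurableType d') (R : realType).
Variables (P : probability X R) (k : R.-pker X ~> Y).

(* [P \otimes k], as the kernel product over the one-point space of the
   constant kernel [P] with [k]. *)
Definition measure_kernel_prod : set (X * Y) -> \bar R :=
  let cst_P : measurable_fun [set: unit] _ :=
    measurable_cst (P : pprobability X R) in
  kproduct (kprobability cst_P) (kernel_pullback k measurable_snd) tt.

HB.instance Definition _ := Measure.on measure_kernel_prod.

Lemma measure_kernel_prodE A : measurable A ->
  measure_kernel_prod A = (\int[P]_x k x (xsection A x))%E.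
Proof.
move=> mA; apply: eq_integral => x _.
rewrite /kernel.intker_indic /= integral_indic ?setIT ?xsectionE//.
by rewrite -[X in measurable X]xsectionE; exact: measurable_xsection.
Qed.

Let measure_kernel_prodT : measure_kernel_prod [set: X * Y] = 1%E.
Proof.
rewrite measure_kernel_prodE// (eq_integral (cst 1%E)).
  by rewrite integral_cst//= mul1e probability_setT.
by move=> x _; rewrite xsectionE preimage_setT prob_kernel.
Qed.

HB.instance Definition _ := Measure_isProbability.Build _ _ _
  measure_kernel_prod measure_kernel_prodT.

Lemma measure_kernel_prodX1 A : measurable A ->
  measure_kernel_prod (A `*` [set: Y]) = P A.
Proof.
move=> mA; rewrite measure_kernel_prodE; last exact: measurableX.
transitivity (\int[P]_x (\1_A x)%:E)%E; last by rewrite integral_indic// setIT.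
apply: eq_integral => x _.
have [xA|xA] := boolP (x \in A).
  by rewrite in_xsectionX// prob_kernel indicE xA.
by rewrite notin_xsectionX// measure0 indicE (negbTE xA).
Qed.

End measure_kernel_prod.

Lemma measure_kernel_prod_pullback d d' d'' (X : measurableType d)
    (Y : measurableType d') (Z : measurableType d'') (R : realType)
    (P : probability X R) (Q : probability Y R) (k : R.-pker Y ~> Z)
    (f : X -> Y) (mf : measurable_fun [set: X] f) (C : set (Y * Z)) :
  (forall A, measurable A -> P (f @^-1` A) = Q A) -> measurable C ->
  measure_kernel_prod P (kernel_pullback k mf)
    ((fun p => (f p.1, p.2)) @^-1` C) = (\int[Q]_y k y (xsection C y))%E.
Proof.
move=> fPQ mC.
have mfC : measurable ((fun p => (f p.1, p.2)) @^-1` C).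
  have mf_id : measurable_fun [set: X * Z] (fun p => (f p.1, p.2)).
    apply/measurable_fun_pairP; split; last exact: measurable_snd.
    exact: measurableT_comp mf measurable_fst.
  by have := mf_id measurableT C mC; rewrite setTI.
have mkC : measurable_fun [set: Y] (fun y => k y (xsection C y)).
  by apply: measurable_fun_xsection_finite_kernel; rewrite inE.
rewrite measure_kernel_prodE//.
transitivity
  (\int[P]_(x in f @^-1` setT) ((fun y => k y (xsection C y)) \o f) x)%E.
  by apply: eq_integral => x _; rewrite /= !xsectionE.
rewrite -ge0_integral_pushforward//.
by apply: eq_measure_integral => A mA _; exact: fPQ.
Qed.

Section matrix_measurability.
Context (R : realType) (m n : nat).

Lemma measurable_mx_coord (i : 'I_m) (j : 'I_n) :
  measurable_fun [set: 'M[R]_(m, n)] (fun A => A i j).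
Proof.
apply: (@measurability _ _ _ R _ _ _ (RGenOpens.measurableE R)).
move=> _ [_ [a [b ->]] <-].
rewrite setTI; apply: sub_sigma_algebra.
apply: open_comp; first by move=> A _; exact: coord_continuous.
exact: interval_open.
Qed.

Lemma measurable_mx_eq d (T : measurableType d) (f g : T -> 'M[R]_(m, n)) :
  measurable_fun [set: T] f -> measurable_fun [set: T] g ->
  measurable [set x | f x = g x].
Proof.
move=> mf mg.
have -> : [set x | f x = g x] =
    \bigcap_(ij in [set: 'I_m * 'I_n]) [set x | f x ij.1 ij.2 = g x ij.1 ij.2].
  apply/seteqP; split => [x fg ij _|x fg]; first by rewrite /= fg.
  by apply/matrixP => i j; exact: (fg (i, j)).
apply: fin_bigcap_measurable => [|[i j] _]; first exact: finite_finset.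
have mfg := measurable_fun_eqr
  (measurableT_comp (measurable_mx_coord i j) mf)
  (measurableT_comp (measurable_mx_coord i j) mg).
have := mfg measurableT [set true] I; rewrite setTI.
by congr measurable; apply/seteqP; split => x /= /eqP.
Qed.

End matrix_measurability.

Section grid01.
Context (R : realType).

Definition grid_floor (t : R) (n : nat) : R :=
  (Num.truncn (t * n.+1%:R))%:R / n.+1%:R.

Lemma grid_floor_le t n : 0 <= t -> grid_floor t n <= t.
Proof. by move=> t0; rewrite ler_pdivrMr// truncn_le mulr_ge0. Qed.

Lemma cvg_grid_floor t : 0 <= t -> grid_floor t @ \oo --> t.
Proof.
move=> t0; apply: (@squeeze_cvgr _ _ _ _ (fun n => t - harmonic n) (cst t)).
- apply: nearW => n; rewrite grid_floor_le// andbT /grid_floor.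
  rewrite ler_pdivlMr// mulrBl mulVf ?pnatr_eq0// lerBlDr natr1.
  exact: ltW (truncnS_gt _).
- rewrite -[X in _ --> X]subr0.
  by apply: cvgB; [exact: cvg_cst|exact: cvg_harmonic].
- exact: cvg_cst.
Qed.

Lemma eq_cst_within01_grid (V : topologicalType) (y : R -> V) (c : V) :
  hausdorff_space V -> {within `[0, 1]%classic, continuous y} ->
  (forall n k, (k <= n.+1)%N -> y (k%:R / n.+1%:R) = c) ->
  forall t, `[0, 1]%classic t -> y t = c.
Proof.
move=> hV cy yc t t01.
have /andP[t0 t1] : (0 <= t) && (t <= 1) by move: t01; rewrite /= in_itv.
have grid01 n : `[0, 1]%classic (grid_floor t n).
  by rewrite /= in_itv /= divr_ge0//= (le_trans (grid_floor_le n t0)).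
have grid_c n : y (grid_floor t n) = c.
  by apply: yc; rewrite truncn_le_nat (le_lt_trans (ler_piMl _ t1)) ?ltr_nat.
have grid_within : grid_floor t @ \oo --> within `[0, 1]%classic (nbhs t).
  move=> W /(cvg_grid_floor t0) [N _ gW]; exists N => // n /gW.
  by apply; exact: grid01.
have : (y \o grid_floor t) @ \oo --> y t.
  have yt : y @ within `[0, 1]%classic (nbhs t) --> y t.
    exact: ((@subspace_continuousP R _ _ y).1 cy t t01).
  exact: cvg_trans (cvg_fmap2 grid_within) yt.
have -> : y \o grid_floor t = cst c by apply/funext => n; exact: grid_c.
by move/(cvg_unique hV); apply; exact: cvg_cst.
Qed.

End grid01.

Lemma measurable_ev_preimage (R : realType) (V : ptopologicalType)
    (mV : set (set V)) (t : R) (A : set V) :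
  `[0, 1]%classic t -> mV A -> measurable (ev t @^-1` A : set (Curves R mV)).
Proof.
by move=> t01 mA; apply: sub_sigma_algebra; exists t => //; exists A.
Qed.

Lemma is_curve_pair_cst (R : realType) (V W : topologicalType)
    (w : curve R V) (z : W) :
  is_curve (fun t => (curve_fun w t, z)).
Proof.
case: w => f [cf ef] /=; split; last by move=> t; rewrite ef.
by move=> t; apply: cvg_pair; [exact: cf | exact: cvg_cst].
Qed.

Section parallel_curves.
Context (R : realType) (d : nat).
Local Notation Rd := 'rV[R]_d.

Let in01_0 : `[0, 1]%classic (0 : R).
Proof. by rewrite /= in_itv /= lexx ler01. Qed.

Lemma measurable_ev t : `[0, 1]%classic t ->
  measurable_fun [set: CRd R d] (ev t).
Proof. by move=> t01 _ A mA; rewrite setTI; exact: measurable_ev_preimage. Qed.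

Lemma measurable_ev0 : measurable_fun [set: CRd R d] (ev 0).
Proof. exact: measurable_ev. Qed.

Lemma measurable_ev2 t : `[0, 1]%classic t ->
  measurable_fun [set: CRd2 R d] (ev t).
Proof. by move=> t01 _ A mA; rewrite setTI; exact: measurable_ev_preimage. Qed.

Lemma measurable_ev_fst t : `[0, 1]%classic t ->
  measurable_fun [set: CRd R d * Rd] (fun p => (ev t p.1, p.2)).
Proof.
move=> t01; apply/measurable_fun_pairP; split => /=.
  exact: measurableT_comp (measurable_ev t01) measurable_fst.
exact: measurable_snd.
Qed.

Definition pair_cst (p : CRd R d * Rd) : CRd2 R d :=
  exist _ _ (is_curve_pair_cst p.1 p.2).

Lemma measurable_pair_cst : measurable_fun [set: CRd R d * Rd] pair_cst.
Proof.
refine (@measurability _ _ _ (CRd2 R d) _ _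
  (@ev_generators R (Rd2 R d) (@meas_Rd2 R d)) erefl _).
move=> _ [_ [t t01 [A mA <-]] <-]; rewrite setTI.
by have := measurable_ev_fst t01 measurableT mA; rewrite setTI.
Qed.

HB.instance Definition _ :=
  isMeasurableFun.Build _ _ _ _ pair_cst measurable_pair_cst.

Lemma p1_pair_cst p : p1 (pair_cst p) = p.1.
Proof. by case: p => -[f cf] z; apply: eq_exist. Qed.

Definition snd_cst : set (CRd2 R d) :=
  [set w | forall t, `[0, 1]%classic t ->
    (curve_fun w t).2 = (curve_fun w 0).2].

Lemma snd_cst_pair_cst p : snd_cst (pair_cst p).
Proof. by []. Qed.

Lemma measurable_snd_cst : measurable snd_cst.
Proof.
pose grid n k : R := k%:R / n.+1%:R.
have grid01 n k : (k <= n.+1)%N -> `[0, 1]%classic (grid n k).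
  move=> kn; rewrite /= in_itv /= divr_ge0//= ler_pdivrMr ?ltr0n// mul1r.
  by rewrite ler_nat.
have -> : snd_cst = \bigcap_n \bigcap_(k in [set k | (k <= n.+1)%N])
    [set w | (ev (grid n k) w).2 = (ev 0 w).2].
  apply/seteqP; split => [w w_cst n _ k kn|w w_grid t t01] /=.
    exact/w_cst/grid01.
  apply: (@eq_cst_within01_grid _ _ (fun t => (curve_fun w t).2)) => //.
  - case: w {w_grid t t01} => f [cf _] t /=.
    by apply: continuous_comp; [exact: cf | exact: cvg_snd].
  - by move=> n k kn; exact: w_grid.
apply: bigcapT_measurable => n; apply: bigcap_measurableType => k kn.
apply: (@measurable_mx_eq R 1 d _ (CRd2 R d) (fun w => (ev (grid n k) w).2)
  (fun w => (ev 0 w).2)).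
  apply: measurableT_comp; first exact: measurable_snd.
  exact: measurable_ev2 (grid01 _ _ kn).
by apply: measurableT_comp; [exact: measurable_snd|exact: measurable_ev2].
Qed.

Lemma snd_cst_partial2_zero w : snd_cst w -> partial2_zero w.
Proof.
move=> w_cst t; rewrite inE => t01; apply: cvg_near_cst.
apply: filterS (near_withinT _ _) => h [_]; rewrite inE => th01.
by rewrite (w_cst _ th01) (w_cst _ t01) subrr scaler0.
Qed.

Lemma snd_cst_C1y w : snd_cst w -> C1y w.
Proof.
move=> w_cst; exists (fun _ => 0); split; first exact: cst_continuous.
exact: snd_cst_partial2_zero.
Qed.

End parallel_curves.

Arguments snd_cst {R d}.

Section parallel_transport.
Context (R : realType) (d : nat) (psi : R.-pker 'rV[R]_d ~> 'rV[R]_d)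
  (eta : probability (CRd R d) R).
Local Notation psi0 := (kernel_pullback psi (@measurable_ev0 R d)).

Definition parallel_transport : probability (CRd2 R d) R :=
  distribution (measure_kernel_prod eta psi0) (@pair_cst R d).

Lemma parallel_transport_p1 (B : set (CRd R d)) : measurable B ->
  parallel_transport (@p1 R d @^-1` B) = eta B.
Proof.
move=> mB; rewrite /= /pushforward -(measure_kernel_prodX1 eta psi0 mB).
congr (_ _); apply/seteqP; split => -[w z];
  by rewrite /preimage /= p1_pair_cst // => -[].
Qed.

Lemma parallel_transport_ev0 (mu : probability 'rV[R]_d R)
    (C : set ('rV[R]_d * 'rV[R]_d)) :
  (forall A : set 'rV[R]_d, measurable A -> eta (ev 0 @^-1` A) = mu A) ->
  measurable C ->
  parallel_transport (ev 0 @^-1` C) = (\int[mu]_x psi x (xsection C x))%E.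
Proof. exact: measure_kernel_prod_pullback. Qed.

Lemma parallel_transport_snd_cst : {ae parallel_transport, forall w, snd_cst w}.
Proof.
exists (~` @snd_cst R d); split => //.
  exact: measurableC (@measurable_snd_cst R d).
suff pair_cst_snd_cst : @pair_cst R d @^-1` (~` snd_cst) = set0.
  by rewrite /= /pushforward pair_cst_snd_cst measure0.
by apply/seteqP; split => // p /=; apply; exact: snd_cst_pair_cst.
Qed.

End parallel_transport.

Unset Implicit Arguments. Set Strict Implicit.

Theorem mainTheorem2 (R : realType) (d : nat)
  (mu : probability 'rV[R]_d R)
  (mu_P2 : (\int[mu]_x (sqnorm x)%:E < +oo)%E)
  (psi : R.-pker 'rV[R]_d ~> 'rV[R]_d)
  (psi_T : (\int[mu]_x \int[psi x]_z (sqnorm z)%:E < +oo)%E)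
  (eta : probability (CRd R d) R)
  (eta0 : forall A : set 'rV[R]_d, measurable A ->
     eta (@ev R _ 0 @^-1` A) = mu A) :
  exists Psi : probability (CRd2 R d) R,
    [/\ (forall B : set (CRd R d), measurable B ->
           Psi (@p1 R d @^-1` B) = eta B),
        {ae Psi, forall w, @C1y R d w},
        {ae Psi, forall w, @partial2_zero R d w} &
        (forall C : set ('rV[R]_d * 'rV[R]_d), measurable C ->
           Psi (@ev R _ 0 @^-1` C) = (\int[mu]_x psi x (xsection C x))%E)].
Proof.
exists (parallel_transport psi eta); split.
- exact: parallel_transport_p1.
- exact: filterS (@snd_cst_C1y R d) (parallel_transport_snd_cst psi eta).
- exact: filterS (@snd_cst_partial2_zero R d)
    (parallel_transport_snd_cst psi eta).
- by move=> C; exact: parallel_transport_ev0.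
Qed.
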